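(* Let $F$ be the elementary cellular automaton with rule number 140. For every nonempty finite word $u\in\{0,1\}^*$, the deterministic communication complexity of $\textsc{SInv}_{F,u}$ restricted to inputs of length $n$ is bounded by a constant independent of $n$.
   Context: An elementary cellular automaton (ECA) with rule number $N\in\{0,\dots,255\}$ is the map $F:\{0,1\}^{\mathbb Z}\to\{0,1\}^{\mathbb Z}$ given by $F(x)_i=f(x_{i-1},x_i,x_{i+1})$. Here the local rule $f:\{0,1\}^3\to\{0,1\}$ is determined by $N=\sum_{a,b,c\in\{0,1\}}2^{4a+2b+c}f(a,b,c)$. For a nonempty finite word $u$, $p_u\in\{0,1\}^{\mathbb Z}$ is defined by $(p_u)_i=u_{i\bmod |u|}$. For a finite word $x$, $p_u[x]$ is the configuration equal to $x$ on positions $0,\dots,|x|-1$ and to $p_u$ elsewhere. $\textsc{SInv}_{F,u}$ is the decision problem: on input a finite word $x$, decide whether there is an integer $w$ such that for all $t\ge0$ the set of positions where $F^t(p_u)$ and $F^t(p_u[x])$ differ is contained in an interval of length $w$. For each $n$, it is regarded as a function $\{0,1\}^n\to\{0,1\}$. For a function $g:X\times Y\to Z$, $D(g)$ is the minimal depth of a deterministic two-party protocol computing $g$. In such a protocol, Alice knows $x$ and Bob knows $y$. The protocol is a binary tree: each internal node is labelled by a function of Alice's input only or of Bob's input only, with values in $\{\text{left},\text{right}\}$, and each leaf is labelled by an output value. For $g:\{0,1\}^m\to Z$, set $D(g)=\max_{0\le i<m}D(g_i)$, where $g_i:\{0,1\}^i\times\{0,1\}^{m-i}\to Z$ is $g_i(x,y)=g(xy)$.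 *)

From Stdlib Require Import ZArith.
From mathcomp Require Import all_boot.
Set Implicit Arguments. Unset Strict Implicit. Unset Printing Implicit Defensive.

(* Configurations in {0,1}^Z, with false = 0 and true = 1. *)
Definition config := Z -> bool.

(* Local rule of ECA number N: f(a,b,c) = bit (4a+2b+c) of N. *)
Definition eca_local (N : nat) (a b c : bool) : bool :=
  odd (N %/ 2 ^ (4 * a + 2 * b + c)).

Definition eca (N : nat) (x : config) : config :=
  fun i => eca_local N (x (i - 1)%Z) (x i) (x (i + 1)%Z).

(* p_u, (p_u)_i = u_{i mod |u|} (Z.modulo is nonnegative for |u| > 0). *)
Definition periodic (u : seq bool) : config :=
  fun i => nth false u (Z.to_nat (Z.modulo i (Z.of_nat (size u)))).

Definition patch (u x : seq bool) : config :=
  fun i => if (Z.leb 0 i && Z.ltb i (Z.of_nat (size x)))%bool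
           then nth false x (Z.to_nat i) else periodic u i.

Definition SInv (N : nat) (u x : seq bool) : Prop :=
  exists w : Z, forall t : nat, exists a : Z, forall i : Z,
    iter t (eca N) (periodic u) i <> iter t (eca N) (patch u x) i ->
    (a <= i < a + w)%Z.

(* Deterministic two-party protocols: binary trees whose internal nodes are
   labelled by a function of Alice's input only or of Bob's input only
   (true = left, false = right), and whose leaves are labelled by outputs. *)
Inductive protocol (X Y O : Type) : Type :=
  | Leaf of O
  | NodeA of (X -> bool) & protocol X Y O & protocol X Y O
  | NodeB of (Y -> bool) & protocol X Y O & protocol X Y O.

Fixpoint run (X Y O : Type) (P : protocol X Y O) (x : X) (y : Y) : O :=
  match P with
  | Leaf o => o
  | NodeA f l r => if f x then run l x y else run r x y
  | NodeB g l r => if g y then run l x y else run r x y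
  end.

Fixpoint depth (X Y O : Type) (P : protocol X Y O) : nat :=
  match P with
  | Leaf _ => 0
  | NodeA _ l r => (maxn (depth l) (depth r)).+1
  | NodeB _ l r => (maxn (depth l) (depth r)).+1
  end.

Definition CC_le (X Y O : Type) (g : X -> Y -> O) (c : nat) : Prop :=
  exists P : protocol X Y O, depth P <= c /\ forall x y, run P x y = g x y.

(* D(g) <= c for g : {0,1}^m -> O, i.e. D(g_i) <= c for all 0 <= i < m,
   with g_i(x, y) = g(xy), x in {0,1}^i, y in {0,1}^(m-i). *)
Definition CC_word_le (O : Type) (m : nat) (g : seq bool -> O) (c : nat) : Prop :=
  forall i : nat, i < m ->
    CC_le (fun (x : i.-tuple bool) (y : (m - i).-tuple bool) => g (x ++ y)) c.

From Stdlib Require Import ZArith Lia.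
From mathcomp Require Import all_boot.

(* Rule 140 is f(a,b,c) = b && (~~ a || c): a 0 never changes, and a 1 dies
   exactly when its left neighbour is 1 and its right neighbour is 0.
   If u contains a 0, then p_u has 0s to the left and to the right of the
   patch; they never move, so the difference stays trapped between them and
   SInv holds for every x.  If u = 1^k, then p_u is the all-ones fixed point;
   a patch containing a 0 makes the block of 1s to the left of its first 0
   recede one cell per step, so the difference grows without bound.  Hence
   SInv_{140,u}(x) = ~~ (all u) || all x, which has a depth-2 protocol. *)

Local Notation evol t y := (iter t (eca 140) y).

Lemma eca_local140 a b c : eca_local 140 a b c = b && (~~ a || c).
Proof. by case: a; case: b; case: c. Qed.

Lemma evolS t (y : config) i :
  evol t.+1 y i = evol t y i && (~~ evol t y (i - 1)%Z || evol t y (i + 1)%Z).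
Proof. by rewrite iterS /eca eca_local140. Qed.

Lemma evol_zero (y : config) i t : y i = false -> evol t y i = false.
Proof. by move=> y0; elim: t => [|t IH] //; rewrite evolS IH. Qed.

Lemma evol_ones (y : config) t i : (forall j, y j) -> evol t y i.
Proof. by move=> y1; elim: t i => [|t IH] i //; rewrite evolS !IH. Qed.

Lemma evol_eq_outside (y y' : config) (p q : Z) :
  y p = false -> y' p = false -> y q = false -> y' q = false ->
  (forall i, (i <= p \/ q <= i)%Z -> y i = y' i) ->
  forall t i, (i <= p \/ q <= i)%Z -> evol t y i = evol t y' i.
Proof.
move=> yp y'p yq y'q eq_out; elim=> [|t IH] i i_out; first exact: eq_out.
have [->|ne_p] := Z.eq_dec i p; first by rewrite !evol_zero.
have [->|ne_q] := Z.eq_dec i q; first by rewrite !evol_zero.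
by rewrite !evolS !IH //; lia.
Qed.

Lemma evol_erode (y : config) (k : Z) :
  (forall i, (i < k)%Z -> y i) -> y k = false ->
  forall t i, ((i < k - Z.of_nat t)%Z -> evol t y i) /\
              ((k - Z.of_nat t <= i <= k)%Z -> evol t y i = false).
Proof.
move=> y1 yk; elim=> [|t IH] i.
  split=> /= hi; first by apply: y1; lia.
  by have -> : i = k by lia.
split=> hi; rewrite evolS.
  by rewrite !(proj1 (IH _)) //; lia.
have [->|ne] := Z.eq_dec i (k - Z.of_nat t.+1)%Z.
  rewrite (proj1 (IH (_ - 1)%Z)); last lia.
  by rewrite (proj1 (IH _)) ?(proj2 (IH (_ + 1)%Z)) //; lia.
by rewrite (proj2 (IH i)) //; lia.
Qed.

Lemma periodic_ones u i : 0 < size u -> all id u -> periodic u i.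
Proof.
move=> u_gt0 /allP u1; rewrite /periodic.
have L_gt0 : (0 < Z.of_nat (size u))%Z by move/ltP: u_gt0; lia.
have [? ?] := Z.mod_pos_bound i _ L_gt0.
have : Z.to_nat (i mod Z.of_nat (size u)) < size u by apply/ltP; lia.
by move/(mem_nth false)/u1.
Qed.

Lemma periodic_shift u j m : j < size u ->
  periodic u (Z.of_nat j + m * Z.of_nat (size u))%Z = nth false u j.
Proof.
move=> /ltP ju; rewrite /periodic Z_mod_plus_full Z.mod_small ?Nat2Z.id //; lia.
Qed.

Lemma patch_out u x i :
  (i < 0 \/ Z.of_nat (size x) <= i)%Z -> patch u x i = periodic u i.
Proof.
move=> i_out; rewrite /patch.
by case: (Z.leb_spec 0 i); case: (Z.ltb_spec i (Z.of_nat (size x))) => //= *; lia.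
Qed.

Lemma patch_in u x i : i < size x -> patch u x (Z.of_nat i) = nth false x i.
Proof.
move=> /ltP ix; rewrite /patch Nat2Z.id.
by case: (Z.leb_spec 0 (Z.of_nat i)); case: (Z.ltb_spec (Z.of_nat i) (Z.of_nat (size x))) => //= *; lia.
Qed.

Lemma patch_ones u x i : 0 < size u -> all id u -> all id x -> patch u x i.
Proof.
move=> u_gt0 u1 /allP x1.
case: (Z.leb_spec 0 i) => [i_ge0|?]; last by rewrite patch_out ?periodic_ones //; left.
case: (Z.ltb_spec i (Z.of_nat (size x))) => [i_lt|?]; last first.
  by rewrite patch_out ?periodic_ones //; right.
have ix : Z.to_nat i < size x by apply/ltP; lia.
by rewrite -(Z2Nat.id i) // patch_in //; apply/x1/mem_nth.
Qed.

Lemma SInv140_walls u x p q :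
  periodic u p = false -> periodic u q = false ->
  (p < 0)%Z -> (Z.of_nat (size x) <= q)%Z -> SInv 140 u x.
Proof.
move=> up uq p_lt0 x_le_q.
have out i : (i <= p \/ q <= i)%Z -> periodic u i = patch u x i.
  by move=> i_out; rewrite patch_out //; lia.
exists (q - p)%Z => t; exists (p + 1)%Z => i differ.
suff : ~ (i <= p \/ q <= i)%Z by lia.
move=> i_out; apply: differ; apply: evol_eq_outside i_out => //.
- by rewrite -out //; lia.
- by rewrite -out //; lia.
Qed.

Lemma SInv140_has_zero u x : 0 < size u -> ~~ all id u -> SInv 140 u x.
Proof.
rewrite -has_predC => u_gt0 /hasP[b bu /negPf b0]; move: bu; rewrite b0.
move=> /(nthP false)[j ju uj]; set L := Z.of_nat (size u).
have L_gt0 : (0 < L)%Z by rewrite /L; move/ltP: u_gt0; lia.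
have j_lt : (Z.of_nat j < L)%Z by apply/Nat2Z.inj_lt/ltP.
apply: (@SInv140_walls _ _ (Z.of_nat j + -1 * L) (Z.of_nat j + Z.of_nat (size x) * L)).
- by rewrite periodic_shift.
- by rewrite periodic_shift.
- lia.
- nia.
Qed.

Lemma SInv140_ones u x : 0 < size u -> all id u -> SInv 140 u x <-> all id x.
Proof.
move=> u_gt0 u1; have pu1 i := periodic_ones u i u_gt0 u1.
split; last first.
  move=> x1; exists 0%Z => t; exists 0%Z => i.
  by rewrite !evol_ones // => j; apply: patch_ones.
move=> [w Hw]; apply: contraT; rewrite -has_predC => x0; exfalso.
set k := find (predC id) x; have k_lt : k < size x by rewrite -has_find.
have pk0 : patch u x (Z.of_nat k) = false.
  by rewrite patch_in //; move: (nth_find false x0) => /= /negPf.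
have p1 i : (i < Z.of_nat k)%Z -> patch u x i.
  move=> i_lt; case: (Z.ltb_spec i 0) => [?|i_ge0]; first by rewrite patch_out //; left.
  have ik : Z.to_nat i < k by apply/ltP; lia.
  rewrite -(Z2Nat.id i) // patch_in ?(leq_trans ik (ltnW k_lt)) //.
  by move: (before_find false ik) => /= /negbFE.
have erode := @evol_erode _ _ p1 pk0.
(* At time t = w both k - t and k lie in the difference set. *)
set t := Z.to_nat w; have [a Ha] := Hw t.
have d_k := Ha (Z.of_nat k); have d_kt := Ha (Z.of_nat k - Z.of_nat t)%Z.
rewrite evol_ones // (proj2 (erode _ _)) in d_k; last lia.
rewrite evol_ones // (proj2 (erode _ _)) in d_kt; last lia.
have := d_k ltac:(done); have := d_kt ltac:(done); rewrite /t; lia.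
Qed.

Lemma CC_word_le_orb_all m (b : bool) : CC_word_le m (fun x => b || all id x) 2.
Proof.
move=> i _; case: b; first by exists (Leaf _ _ true).
exists (NodeA (fun x : i.-tuple bool => all id x)
          (NodeB (fun y : (m - i).-tuple bool => all id y) (Leaf _ _ true) (Leaf _ _ false))
          (Leaf _ _ false)); split=> // x y /=.
by rewrite all_cat; case: (all id x); case: (all id y).
Qed.

Theorem mainTheorem8 (u : seq bool) (hu : 0 < size u) :
  exists c : nat, forall n : nat,
    exists g : seq bool -> bool,
      (forall x : seq bool, size x = n -> (g x = true <-> SInv 140 u x)) /\
      CC_word_le n g c.
Proof.
exists 2 => n; exists (fun x => ~~ all id u || all id x).
split; last exact: CC_word_le_orb_all.
move=> x _; case u1: (all id u) => /=.
- by rewrite (SInv140_ones u x hu u1).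
- by split=> // _; apply: SInv140_has_zero => //; rewrite u1.
Qed.
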